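(* Let $B,C,D\in\mathbb{C}$. If all roots of the polynomial $x^3+Bx^2+Cx+D$ have the same absolute value, then $C|C|^2=\overline{B}|B|^2D$.
   Context: $\overline{z}$ denotes complex conjugation. *)

From mathcomp Require Import all_boot all_order all_algebra.
Set Implicit Arguments. Unset Strict Implicit. Unset Printing Implicit Defensive.
Import Order.TTheory GRing.Theory Num.Theory.
Local Open Scope ring_scope.

Definition cubic (F : numClosedFieldType) (B C D : F) : {poly F} :=
  'X^3 + B *: 'X^2 + C *: 'X + D%:P.

From mathcomp Require Import all_boot all_order all_algebra ring.
Import Order.TTheory GRing.Theory Num.Theory.
Local Open Scope ring_scope.

(* Write the cubic as (x - a)(x - b)(x - c), so that B = -(a + b + c),
   C = ab + bc + ca and D = -abc.  If |a| = |b| = |c| = r then every root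
   satisfies conj z = r^2 / z, hence conj B = r^2 C / D and
   conj C = r^4 B / D; both sides of the identity then equal r^4 B C^2 / D.
   If r = 0 all three coefficients vanish. *)

Section Cubic.

Context {F : numClosedFieldType}.

Lemma size_cubic (B C D : F) : size (cubic B C D) = 4%N.
Proof.
rewrite /cubic -!addrA size_polyDl ?size_polyXn //.
rewrite (leq_ltn_trans (size_polyD _ _)) // gtn_max.
rewrite (leq_ltn_trans (size_scale_leq _ _)) ?size_polyXn //=.
rewrite (leq_ltn_trans (size_polyD _ _)) // gtn_max size_polyC.
rewrite (leq_ltn_trans (size_scale_leq _ _)) ?size_polyX //=.
by case: (_ != _).
Qed.

Lemma lead_coef_cubic (B C D : F) : lead_coef (cubic B C D) = 1.
Proof. by rewrite lead_coefE size_cubic /cubic !coefE /=; ring. Qed.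

Lemma cubic_factor (B C D : F) :
  exists a b c, cubic B C D = ('X - a%:P) * ('X - b%:P) * ('X - c%:P).
Proof.
have [r def_p] := closed_field_poly_normal (cubic B C D).
rewrite lead_coef_cubic scale1r in def_p.
have := congr1 (fun p : {poly F} => size p) def_p; rewrite size_cubic size_prod_XsubC.
case: r def_p => [|a [|b [|c [|? ?]]]] //= def_p _.
by exists a, b, c; rewrite def_p !big_cons big_nil mulr1 mulrA.
Qed.

Lemma cubic_XsubC (a b c : F) :
  ('X - a%:P) * ('X - b%:P) * ('X - c%:P) =
  cubic (- (a + b + c)) (a * b + a * c + b * c) (- (a * b * c)).
Proof. by rewrite /cubic -!mul_polyC !polyCD !polyCN !polyCM; ring. Qed.

Lemma cubic_inj (B C D B' C' D' : F) :
  cubic B C D = cubic B' C' D' -> [/\ B = B', C = C' & D = D'].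
Proof.
move=> eq_p; have coef_p i := congr1 (fun p : {poly F} => p`_i) eq_p.
have := coef_p 2%N; have := coef_p 1%N; have := coef_p 0%N.
by rewrite /cubic !coefE /= !(add0r, addr0, mulr0, mulr1) => -> -> ->.
Qed.

Lemma conjC_norm_div (x : F) : x != 0 -> x^* = `|x| ^+ 2 / x.
Proof. by move=> x_neq0; rewrite normCK mulrAC divff ?mul1r. Qed.

Lemma vieta_equal_norm (a b c : F) : `|b| = `|a| -> `|c| = `|a| ->
  (a * b + a * c + b * c) * `|a * b + a * c + b * c| ^+ 2 =
  (- (a + b + c))^* * `|- (a + b + c)| ^+ 2 * - (a * b * c).
Proof.
move=> norm_b norm_c; rewrite !normCK.
have [a0|a_neq0] := eqVneq a 0.
  have b0 : b = 0 by apply/eqP; rewrite -normr_eq0 norm_b a0 normr0.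
  have c0 : c = 0 by apply/eqP; rewrite -normr_eq0 norm_c a0 normr0.
  by rewrite a0 b0 c0 !(mul0r, mulr0, addr0, oppr0).
have b_neq0 : b != 0 by rewrite -normr_eq0 norm_b normr_eq0.
have c_neq0 : c != 0 by rewrite -normr_eq0 norm_c normr_eq0.
rewrite !(rmorphN, rmorphD, rmorphM) /= !conjC_norm_div // norm_b norm_c.
by field; rewrite a_neq0 b_neq0 c_neq0.
Qed.

End Cubic.

Theorem lemma4p5 (F : numClosedFieldType) (B C D : F) :
  (forall x y : F, root (cubic B C D) x -> root (cubic B C D) y -> `|x| = `|y|) ->
  C * `|C| ^+ 2 = B^* * `|B| ^+ 2 * D.
Proof.
move=> eq_norm; have [a [b [c def_p]]] := cubic_factor B C D.
have root_p x : x \in [:: a; b; c] -> root (cubic B C D) x.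
  by rewrite !inE def_p !rootM !root_XsubC => /or3P[] ->; rewrite ?orbT.
have norm_root x : x \in [:: a; b; c] -> `|x| = `|a|.
  by move=> /root_p root_x; apply: eq_norm root_x (root_p a _); rewrite inE eqxx.
move: def_p; rewrite cubic_XsubC => /cubic_inj[-> -> ->].
by apply: vieta_equal_norm; apply: norm_root; rewrite !inE eqxx ?orbT.
Qed.
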